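(* For every positive integer $d$ and every $\epsilon\in(0,1)$ there exist $n_0$ and, for each $n\ge n_0$, a family $\mathcal{C}_n$ of subsets of $[n]^d$ such that: (i) every sum-free subset of $[n]^d$ is contained in some member of $\mathcal{C}_n$; (ii) every member of $\mathcal{C}_n$ contains at most $\epsilon n^{2d}$ Schur triples; (iii) $\log_2|\mathcal{C}_n|=o(n^d)$ as $n\to\infty$.
   Context: $[n]=\{1,\dots,n\}$, $[n]^d\subset\mathbb{Z}^d$ with coordinatewise addition. A set is sum-free if there are no $a,b,c$ in it (not necessarily distinct) with $a+b=c$. A Schur triple in a set $A$ is a set $\{a,b,c\}\subseteq A$ of three distinct elements with $a+b=c$. *)

From mathcomp Require Import all_boot.
From Stdlib Require Import Reals.

Set Implicit Arguments.
Unset Strict Implicit.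
Unset Printing Implicit Defensive.

(* A point of [n]^d is encoded as x : {ffun 'I_d -> 'I_n}; its i-th
   coordinate is (x i) + 1, which ranges over [n] = {1,...,n}. *)
Definition grid (n d : nat) : finType := {ffun 'I_d -> 'I_n}.

Definition coord {n d} (x : grid n d) (i : 'I_d) : nat := (x i).+1.

Definition is_sum {n d} (a b c : grid n d) : bool :=
  [forall i, coord a i + coord b i == coord c i].

Definition sum_free {n d} (A : {set grid n d}) : bool :=
  [forall a in A, forall b in A, forall c in A, ~~ is_sum a b c].

Definition schur_triples {n d} (A : {set grid n d}) : {set {set grid n d}} :=
  [set S : {set grid n d} | (S \subset A) &&
     [exists a, exists b, exists c,
        [&& S == [set a; b; c], a != b, a != c, b != c & is_sum a b c]]].

Definition log2 (x : R) : R := (ln x / ln 2)%R.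

(* Write N for the size of the ambient finite set and call a triple with a + b = c a
   solution.  Containers are built by iterated refinement, starting from the whole set.
   If a container B carries more than N^2/m solutions, then more than N/2m of its
   elements are heavy: each lies in at least N/2m solutions inside B.  Let A be a
   solution-free subset of B.  If A meets the heavy set in fewer than 4mr points, drop
   the other heavy points from B.  Otherwise fix 4mr heavy points F of A and greedily
   choose at most 4r points S of A, until every candidate x of B outside F + S has fewer
   than r candidates in F + x; the candidates with this property form the new container.
   Summed over F, the solutions (f, x, f + x) inside the new container C number at most
   r |C| <= r N, those inside B at least |F| N/2m = 2 r N, and each point of B \ C
   accounts for at most 2 |F| of the latter, so C has at least N/8m fewer points than B.
   After 8m + 1 refinements every container carries at most N^2/m solutions.  A container
   is determined by the fingerprints (F, S) chosen along the way, sets of total size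
   O(m^2 r); with r about sqrt N there are 2^O(sqrt N log N) = 2^o(N) containers. *)

From mathcomp Require Import all_boot zify.
From Stdlib Require Import Reals Lia Lra.
(* Restore [^] as [expn] after the Stdlib imports. *)
Import ssrnat.
Set Implicit Arguments.
Unset Strict Implicit.
Unset Printing Implicit Defensive.

Lemma sum_nat_le1 (I : finType) (X : {pred I}) (P : pred I) :
  (forall x y, P x -> P y -> x = y) -> \sum_(x in X) P x <= 1.
Proof.
move=> P_uniq; rewrite -big_mkcondr sum1_card.
by apply/card_le1_eqP => x y /andP[_ Px] /andP[_ Py]; apply: P_uniq.
Qed.

Lemma card_small_sets (T : finType) k :
  #|[set X : {set T} | #|X| <= k]| <= #|T|.+1 ^ k.
Proof.
pose f (g : {ffun 'I_k -> option T}) := [set x | Some x \in codom g].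
apply: leq_trans (_ : #|[set f g | g in [set: {ffun 'I_k -> option T}]]| <= _).
  apply: subset_leq_card; apply/subsetP => X; rewrite inE => Xk.
  pose s := map Some (enum X).
  have mem_s x : (Some x \in s) = (x \in X).
    by rewrite mem_map ?mem_enum //; move=> ? ? [].
  apply/imsetP; exists [ffun i : 'I_k => nth None s i]; first by rewrite inE.
  apply/setP => x; rewrite inE; apply/idP/codomP => [xX | [i]].
    have lt_x_k : index (Some x) s < k.
      by apply: leq_trans Xk; rewrite cardE -(size_map Some) index_mem mem_s.
    by exists (Ordinal lt_x_k); rewrite ffunE nth_index ?mem_s.
  rewrite ffunE => Ex; case: (ltnP i (size s)) => [lt_i_s | ]; last first.
    by move/(nth_default None); rewrite -Ex.
  by rewrite -mem_s Ex (mem_nth None lt_i_s).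
apply: leq_trans (leq_imset_card _ _) _.
by rewrite cardsT card_ffun card_option card_ord.
Qed.

Definition sqrt_pow2 N := 2 ^ (trunc_log 2 N)./2.

Lemma sqrt_pow2_gt0 N : 0 < sqrt_pow2 N.
Proof. by rewrite expn_gt0. Qed.

Lemma sqrt_pow2_bounds N :
  0 < N -> sqrt_pow2 N * sqrt_pow2 N <= N < 4 * sqrt_pow2 N * sqrt_pow2 N.
Proof.
move=> N_gt0; have /andP[lo hi] := trunc_log_bounds (isT : 1 < 2) N_gt0.
rewrite /sqrt_pow2 -expnD -mulnA -expnD -[4]/(2 ^ 2) -expnD.
have := odd_double_half (trunc_log 2 N); move: lo hi.
set k := trunc_log 2 N; move=> lo hi k_eq.
by rewrite (leq_trans _ lo) ?(leq_trans hi) // leq_exp2l //; lia.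
Qed.

Lemma lin_le_exp2 c j : 8 * c + 2 <= j -> c * (2 * j + 2) <= 2 ^ j.
Proof.
elim: j => [|j IHj]; first by rewrite leqn0 addn2.
rewrite leq_eqVlt => /orP[/eqP <- | /IHj le_j]; last by rewrite expnS; nia.
have := ltn_expl (4 * c + 1) (isT : 1 < 2).
rewrite (_ : 8 * c + 2 = (4 * c + 1) * 2) ?expnM; last by lia.
by move: (2 ^ (4 * c + 1)) => x; nia.
Qed.

Lemma sqrt_pow2_large c :
  exists N0, forall N, N0 <= N -> c * (trunc_log 2 N).+1 <= sqrt_pow2 N.
Proof.
exists (2 ^ (2 * (8 * c + 2))) => N le_N.
have := trunc_log_max (isT : 1 < 2) le_N; have := odd_double_half (trunc_log 2 N).
set k := trunc_log 2 N; move=> k_eq le_k.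
by apply: leq_trans (leq_mul (leqnn c) _) (lin_le_exp2 (j := k./2) _); lia.
Qed.

Section Containers.

Variables (T : finType) (sum : T -> T -> T -> bool).
Local Notation N := #|T|.

Hypothesis sum_functional : forall a b c c', sum a b c -> sum a b c' -> c = c'.
Hypothesis sum_cancelr : forall a b b' c, sum a b c -> sum a b' c -> b = b'.
Hypothesis sum_cancell : forall a a' b c, sum a b c -> sum a' b c -> a = a'.

Definition solution_free (A : {set T}) :=
  [forall a in A, forall b in A, forall c in A, ~~ sum a b c].

Lemma solution_freeP (A : {set T}) a b c :
  solution_free A -> a \in A -> b \in A -> c \in A -> ~~ sum a b c.
Proof.
move=> /forall_inP freeA aA bA cA.
by move: (freeA a aA) => /forall_inP/(_ b bA)/forall_inP/(_ c cA).
Qed.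

Definition deg (B : {set T}) a := \sum_(b in B) \sum_(c in B) sum a b c.

Definition nsol (B : {set T}) := \sum_(a in B) deg B a.

Lemma nsolE (B : {set T}) :
  nsol B = #|[set t : T * T * T |
               [&& t.1.1 \in B, t.1.2 \in B, t.2 \in B & sum t.1.1 t.1.2 t.2]]|.
Proof.
rewrite -sum1dep_card (eq_bigl (fun t => [&& t.1.1 \in B & t.1.2 \in B] &&
                                      [&& t.2 \in B & sum t.1.1 t.1.2 t.2])); last first.
  by move=> t; rewrite !andbA.
rewrite -(pair_big_dep (fun ab => [&& ab.1 \in B & ab.2 \in B])
                       (fun ab c => [&& c \in B & sum ab.1 ab.2 c]) (fun _ _ => 1)) /=.
rewrite -(pair_big (mem B) (mem B) (fun a b => \sum_(c | (c \in B) && sum a b c) 1)) /=.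
by apply: eq_bigr => a _; apply: eq_bigr => b _; rewrite big_mkcondr.
Qed.

Lemma deg_le_card (B : {set T}) a : deg B a <= #|B|.
Proof.
rewrite -sum1_card; apply: leq_sum => b _.
by apply: sum_nat_le1; apply: sum_functional.
Qed.

Lemma deg_subset (B C : {set T}) a : C \subset B -> deg B a <= deg C a + 2 * #|B :\: C|.
Proof.
move=> sCB; have split_B (F : T -> nat) :
    \sum_(x in B) F x = \sum_(x in C) F x + \sum_(x in B :\: C) F x.
  by rewrite (big_setID C) /= (setIidPr sCB).
rewrite /deg split_B mul2n -addnn addnA leq_add //; last first.
  rewrite -sum1_card; apply: leq_sum => b _.
  by apply: sum_nat_le1; apply: sum_functional.
rewrite (eq_bigr _ (fun b _ => split_B _)) big_split leq_add2l exchange_big /=.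
rewrite -sum1_card; apply: leq_sum => c _.
by apply: sum_nat_le1 => b b'; apply: sum_cancelr.
Qed.

Definition heavy (B : {set T}) m := [set a in B | N <= deg B a * (2 * m)].

Lemma heavy_subset (B : {set T}) m : heavy B m \subset B.
Proof. by apply/subsetP => a; rewrite inE => /andP[]. Qed.

Lemma card_heavy (B : {set T}) m :
  N * N < m * nsol B -> N < 2 * m * #|heavy B m|.
Proof.
move=> many_sol; set D := heavy B m.
have sum_heavy : \sum_(a in D) deg B a <= #|D| * N.
  rewrite -sum_nat_const; apply: leq_sum => a _.
  exact: leq_trans (deg_le_card B a) (max_card B).
have sum_light : \sum_(a in B :\: D) deg B a * (2 * m) <= N * N.
  apply: leq_trans (_ : \sum_(a in B :\: D) N <= _); last first.
    by rewrite sum_nat_const leq_mul2r max_card orbT.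
  apply: leq_sum => a; rewrite !inE => /andP[+ aB]; rewrite aB -ltnNge; exact: ltnW.
rewrite -big_distrl /= in sum_light.
have split_sol : nsol B = \sum_(a in D) deg B a + \sum_(a in B :\: D) deg B a.
  by rewrite /nsol (big_setID D) /= (setIidPr (heavy_subset B m)).
rewrite split_sol mulnDr in many_sol.
have {}sum_heavy := leq_mul (leqnn m) sum_heavy.
have : N * N < N * (2 * m * #|D|).
  move: many_sol sum_heavy sum_light.
  set s1 := \sum_(a in D) _; set s2 := \sum_(a in _) _; clearbody s1 s2.
  by move: #|D| N => d n; lia.
by case: (posnP N) => [-> // | /ltn_pmul2l ->].
Qed.

Definition translate (X : {set T}) s := [set y | [exists f in X, sum f s y]].

Definition core (B X S : {set T}) := B :\: \bigcup_(s in S) translate X s.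

Definition container (B X S : {set T}) r :=
  [set x in core B X S | #|core B X S :&: translate X x| < r].

Lemma core0 (B X : {set T}) : core B X set0 = B.
Proof. by rewrite /core big_set0 setD0. Qed.

Lemma core_setU1 (B X S : {set T}) a :
  core B X (a |: S) = core B X S :\: translate X a.
Proof. by rewrite /core bigcup_setU big_set1 setUC setDDl. Qed.

Lemma subset_core (A B X S : {set T}) :
  solution_free A -> A \subset B -> X \subset A -> S \subset A ->
  A \subset core B X S.
Proof.
move=> freeA sAB sXA sSA; apply/subsetP => y yA.
rewrite inE (subsetP sAB y yA) andbT; apply/bigcupP => -[s sS].
rewrite inE => /exists_inP[f fX]; apply/negP.
exact: solution_freeP freeA (subsetP sXA f fX) (subsetP sSA s sS) yA.
Qed.

Lemma container_subset (B X S : {set T}) r : container B X S r \subset B.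
Proof. by apply/subsetP => x; rewrite !inE => /andP[/andP[]]. Qed.

Lemma greedy_container (A B X : {set T}) r :
  0 < r -> solution_free A -> A \subset B -> X \subset A ->
  exists S : {set T}, [/\ S \subset A, #|S| * r <= #|B| & A \subset container B X S r].
Proof.
move=> r_gt0 freeA sAB sXA.
suff: forall S : {set T}, S \subset A -> #|S| * r + #|core B X S| <= #|B| ->
    exists S : {set T}, [/\ S \subset A, #|S| * r <= #|B| & A \subset container B X S r].
  by move/(_ set0); apply; rewrite ?sub0set // cards0 core0.
move=> S; have [k] := ubnP #|core B X S|.
elim: k => // k IHk in S *; rewrite ltnS => core_k sSA inv.
have [/exists_inP[a aA big_a] | /exists_inPn small] :=
  boolP [exists a in A, r <= #|core B X S :&: translate X a|].
  have le_Ia := subset_leq_card (subsetIl (core B X S) (translate X a)).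
  apply: (IHk (a |: S)); rewrite ?subUset ?sub1set ?aA // core_setU1 cardsD.
    by lia.
  by rewrite cardsU1; lia.
exists S; split => //; first by lia.
apply/subsetP => y yA; rewrite inE (subsetP (subset_core freeA sAB sXA sSA) y yA).
by rewrite ltnNge small.
Qed.

Lemma sum_sol_le_translate (X : {set T}) x y :
  \sum_(f in X) sum f x y <= (y \in translate X x).
Proof.
case: (boolP (y \in translate X x)) => [_ | yNX].
  by apply: sum_nat_le1 => f f'; apply: sum_cancell.
rewrite leqn0 sum_nat_eq0; apply/forall_inP => f fX; rewrite eqb0.
by apply: contra yNX => sol_f; rewrite inE; apply/exists_inP; exists f.
Qed.

Lemma sum_deg_container (B X S : {set T}) r :
  \sum_(f in X) deg (container B X S r) f <= #|container B X S r| * r.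
Proof.
set C := container B X S r.
rewrite /deg exchange_big /= -sum_nat_const; apply: leq_sum => x xC.
rewrite exchange_big /=.
apply: leq_trans (_ : \sum_(y in C) (y \in translate X x) <= _).
  by apply: leq_sum => y _; apply: sum_sol_le_translate.
rewrite -big_mkcondr sum1_card.
move: xC; rewrite inE => /andP[_ /ltnW]; apply: leq_trans.
apply: subset_leq_card; apply/subsetP => y /andP[yC yX].
by rewrite in_setI yX andbT; move: yC; rewrite inE => /andP[].
Qed.

Lemma shrink_light (A B : {set T}) m r :
  32 * m * m * r <= N -> N * N < m * nsol B -> #|A :&: heavy B m| < 4 * m * r ->
  8 * m * #|(B :\: heavy B m) :|: (A :&: heavy B m)| + N <= 8 * m * #|B|.
Proof.
move=> le_r_N many_sol few_heavy; set D := heavy B m.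
have lt_N_D := card_heavy many_sol; rewrite -/D in lt_N_D.
have le_D_B := subset_leq_card (heavy_subset B m); rewrite -/D in le_D_B.
have le_B' := leq_card_setU (B :\: D) (A :&: D).
rewrite cardsDS ?heavy_subset // in le_B'.
have le_AD : 8 * m * #|A :&: D| <= N.
  apply: leq_trans le_r_N; move: (ltnW few_heavy); move: #|A :&: D| => a; nia.
have := leq_mul (leqnn (8 * m)) le_B'; rewrite mulnDr mulnBr; nia.
Qed.

Lemma shrink_container (B F S : {set T}) m r :
  0 < m -> 0 < r -> #|F| = 4 * m * r -> F \subset heavy B m ->
  8 * m * #|container B F S r| + N <= 8 * m * #|B|.
Proof.
move=> m_gt0 r_gt0 card_F sFD; set C := container B F S r.
have sCB : C \subset B := container_subset B F S r.
have heavy_F : #|F| * N <= \sum_(f in F) deg B f * (2 * m).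
  rewrite -sum_nat_const; apply: leq_sum => f fF.
  by move: (subsetP sFD f fF); rewrite inE => /andP[].
rewrite -big_distrl /= in heavy_F.
have split_F : \sum_(f in F) deg B f <= \sum_(f in F) deg C f + #|F| * (2 * #|B :\: C|).
  rewrite -sum_nat_const -big_split /=; apply: leq_sum => f _; exact: deg_subset.
have sum_C : \sum_(f in F) deg C f <= N * r.
  apply: leq_trans (sum_deg_container B F S r) _.
  by rewrite leq_mul2r max_card orbT.
rewrite cardsDS // card_F in split_F; rewrite card_F in heavy_F.
have le_C_B := subset_leq_card sCB.
have : (2 * m * r) * N <= (2 * m * r) * (8 * m * (#|B| - #|C|)).
  have := leq_mul (leqnn (2 * m)) split_F; have := leq_mul (leqnn (2 * m)) sum_C.
  move: heavy_F; set s1 := \sum_(f in F) _; set s2 := \sum_(f in F) _.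
  by clearbody s1 s2; move: (#|B| - #|C|) N => k n; lia.
rewrite leq_pmul2l ?muln_gt0 ?m_gt0 // mulnBr.
have := leq_mul (leqnn (8 * m)) le_C_B; lia.
Qed.

(* A fingerprint (true, F, _) records a step removing the heavy points outside F;
   (false, F, S) a step to [container B F S r]. *)
Definition fingerprint := (bool * {set T} * {set T})%type.

Definition step m r (B : {set T}) (c : fingerprint) : {set T} :=
  if c.1.1 then (B :\: heavy B m) :|: c.1.2 else container B c.1.2 c.2 r.

Definition small_fingerprints m r : {set fingerprint} :=
  [set c : fingerprint | (#|c.1.2| <= 4 * m * r) && (#|c.2| <= 4 * r)].

Lemma exists_step (A B : {set T}) m r :
  0 < m -> 0 < r -> 32 * m * m * r <= N -> N < 4 * r * r ->
  solution_free A -> A \subset B -> N * N < m * nsol B ->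
  exists2 c, c \in small_fingerprints m r &
    A \subset step m r B c /\ 8 * m * #|step m r B c| + N <= 8 * m * #|B|.
Proof.
move=> m_gt0 r_gt0 le_r_N lt_N_r freeA sAB many_sol; set D := heavy B m.
have [few_heavy | many_heavy] := ltnP #|A :&: D| (4 * m * r).
  exists (true, A :&: D, set0); first by rewrite inE cards0 ltnW.
  split; last exact: shrink_light le_r_N many_sol few_heavy.
  apply/subsetP => y yA; rewrite /step /= !inE yA (subsetP sAB y yA).
  by case: (N <= deg B y * (2 * m)).
have : 0 < #|[set F : {set T} | F \subset A :&: D & #|F| == 4 * m * r]|.
  by rewrite cards_draws bin_gt0.
case/card_gt0P => F; rewrite inE => /andP[sF /eqP card_F].
have [sFA sFD] := (subset_trans sF (subsetIl A D), subset_trans sF (subsetIr A D)).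
have [S [_ card_S sAC]] := greedy_container r_gt0 freeA sAB sFA.
exists (false, F, S); last by split; last exact: shrink_container.
rewrite inE /= card_F leqnn /= -(leq_pmul2r r_gt0).
apply: leq_trans card_S _; apply: leq_trans (max_card B) _; nia.
Qed.

Fixpoint reachable m r k : {set {set T}} :=
  if k is k'.+1 then
    reachable m r k' :|:
    [set step m r p.1 p.2 | p in setX (reachable m r k') (small_fingerprints m r)]
  else [set setT].

Lemma reachable_mono m r j k : j <= k -> reachable m r j \subset reachable m r k.
Proof.
move/subnK <-; elim: (k - j) => // i IHi.
by rewrite addSn; apply: subset_trans IHi (subsetUl _ _).
Qed.

Lemma reachable_cover (A : {set T}) m r k j B :
  0 < m -> 0 < r -> 32 * m * m * r <= N -> N < 4 * r * r -> solution_free A ->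
  B \in reachable m r j -> A \subset B -> 8 * m * #|B| < k * N ->
  exists2 B', B' \in reachable m r (j + k) & A \subset B' /\ m * nsol B' <= N * N.
Proof.
move=> m_gt0 r_gt0 le_r_N lt_N_r freeA.
elim: k j B => [|k IHk] j B reachB sAB; first by rewrite mul0n.
move=> small_B; have [few_sol | many_sol] := leqP (m * nsol B) (N * N).
  by exists B => //; apply: subsetP reachB; apply: reachable_mono; apply: leq_addr.
have [c small_c [sAB' shrink]] := exists_step m_gt0 r_gt0 le_r_N lt_N_r freeA sAB many_sol.
rewrite -addSnnS; apply: (IHk j.+1 (step m r B c)) => //; last first.
  by move: small_B; rewrite mulSn; lia.
by rewrite inE; apply/orP; right; apply/imsetP; exists (B, c); rewrite // in_setX reachB.
Qed.

Lemma card_small_fingerprints m r :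
  #|small_fingerprints m r| <= 2 * (N.+1 ^ (4 * m * r) * N.+1 ^ (4 * r)).
Proof.
apply: leq_trans (_ : #|setX (setX [set: bool] [set X : {set T} | #|X| <= 4 * m * r])
                            [set X : {set T} | #|X| <= 4 * r]| <= _).
  apply: subset_leq_card; apply/subsetP => -[[b X] S].
  by rewrite !inE /= => /andP[-> ->].
rewrite !cardsX cardsT card_bool -mulnA leq_mul2l.
by rewrite leq_mul ?card_small_sets ?orbT.
Qed.

Lemma card_reachable m r k : #|reachable m r k| <= #|small_fingerprints m r|.+1 ^ k.
Proof.
elim: k => [|k IHk] /=; first by rewrite cards1.
apply: leq_trans (leq_card_setU _ _) _.
apply: leq_trans (leq_add (leqnn _) (leq_imset_card _ _)) _.
by rewrite cardsX expnS mulSn mulnC leq_add // leq_mul.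
Qed.

Definition containers m r :=
  [set B in reachable m r (8 * m + 1) | m * nsol B <= N * N].

Lemma containers_cover (A : {set T}) m r :
  0 < m -> 0 < r -> 32 * m * m * r <= N -> N < 4 * r * r -> solution_free A ->
  exists2 B, B \in containers m r & A \subset B.
Proof.
move=> m_gt0 r_gt0 le_r_N lt_N_r freeA.
have N_gt0 : 0 < N by apply: leq_trans le_r_N; rewrite !muln_gt0 m_gt0 r_gt0.
have [|||B reachB [sAB few_sol]] := reachable_cover (k := 8 * m + 1) (j := 0) (B := setT)
  m_gt0 r_gt0 le_r_N lt_N_r freeA.
- by rewrite inE.
- exact: subsetT.
- by rewrite cardsT mulnDl mul1n -[X in X < _]addn0 ltn_add2l.
by exists B; rewrite // inE reachB.
Qed.

Lemma card_containers m r :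
  #|containers m r| <= (2 * N.+1 ^ (4 * m * r + 4 * r)).+1 ^ (8 * m + 1).
Proof.
apply: leq_trans (_ : #|reachable m r (8 * m + 1)| <= _).
  by apply: subset_leq_card; apply/subsetP => B; rewrite inE => /andP[].
apply: leq_trans (card_reachable _ _ _) _.
by rewrite leq_exp2r ?addn1 // ltnS expnD card_small_fingerprints.
Qed.

Lemma card_containers_exp2 m r :
  #|containers m r| <=
  2 ^ ((8 * m + 1) * ((trunc_log 2 N).+1 * (4 * m * r + 4 * r) + 2)).
Proof.
apply: leq_trans (card_containers m r) _.
set E := 4 * m * r + 4 * r.
rewrite [(8 * m + 1) * _]mulnC expnM leq_exp2r ?addn1 // expnD.
have le_pow : N.+1 ^ E <= 2 ^ ((trunc_log 2 N).+1 * E).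
  by rewrite expnM; case: E => // e; rewrite leq_exp2r // trunc_log_ltn.
have pow_gt0 : 0 < N.+1 ^ E by rewrite expn_gt0.
by move: le_pow pow_gt0; move: (N.+1 ^ E) (2 ^ (_ * E)) => x y; rewrite -[2 ^ 2]/4; lia.
Qed.

Lemma sqrt_containers_cover (A : {set T}) m :
  0 < m -> 32 * m * m * (trunc_log 2 N).+1 <= sqrt_pow2 N -> solution_free A ->
  exists2 B, B \in containers m (sqrt_pow2 N) & A \subset B.
Proof.
move=> m_gt0 large freeA.
have le_m_r : 32 * m * m <= sqrt_pow2 N by apply: leq_trans large; rewrite leq_pmulr.
have N_gt0 : 0 < N.
  by case: (posnP N) le_m_r => // ->; rewrite /sqrt_pow2 trunc_log0 expn0; nia.
have /andP[le_rr lt_rr] := sqrt_pow2_bounds N_gt0.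
apply: containers_cover => //; first exact: sqrt_pow2_gt0.
by apply: leq_trans le_rr; rewrite leq_mul2r le_m_r orbT.
Qed.

Lemma card_sqrt_containers m M :
  0 < N -> M * (8 * m + 1) * (4 * m + 6) * (trunc_log 2 N).+1 <= sqrt_pow2 N ->
  exists2 e, #|containers m (sqrt_pow2 N)| <= 2 ^ e & M * e <= N.
Proof.
move=> N_gt0 large; eexists; first exact: card_containers_exp2.
have /andP[le_rr _] := sqrt_pow2_bounds N_gt0.
move: large le_rr (sqrt_pow2_gt0 N); set r := sqrt_pow2 N.
move: (trunc_log 2 N) => k le_r le_rr r_gt0.
apply: leq_trans le_rr; apply: leq_trans (leq_mul le_r (leqnn r)).
by rewrite -!mulnA !leq_mul2l; apply/orP; right; apply/orP; right; nia.
Qed.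

End Containers.

Lemma is_sumP n d (a b c : grid n d) :
  reflect (forall i, a i + b i + 1 = c i) (is_sum a b c).
Proof.
apply: (iffP forallP) => sum_abc i; have := sum_abc i; rewrite /coord.
  by move/eqP; lia.
by move=> abc_i; apply/eqP; lia.
Qed.

Lemma is_sum_functional n d (a b c c' : grid n d) :
  is_sum a b c -> is_sum a b c' -> c = c'.
Proof.
move=> /is_sumP abc /is_sumP abc'; apply/ffunP => i; apply: ord_inj.
by have := abc i; have := abc' i; lia.
Qed.

Lemma is_sum_cancelr n d (a b b' c : grid n d) :
  is_sum a b c -> is_sum a b' c -> b = b'.
Proof.
move=> /is_sumP abc /is_sumP ab'c; apply/ffunP => i; apply: ord_inj.
by have := abc i; have := ab'c i; lia.
Qed.

Lemma is_sum_cancell n d (a a' b c : grid n d) :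
  is_sum a b c -> is_sum a' b c -> a = a'.
Proof.
move=> /is_sumP abc /is_sumP a'bc; apply/ffunP => i; apply: ord_inj.
by have := abc i; have := a'bc i; lia.
Qed.

Lemma card_schur_triples_le n d (B : {set grid n d}) :
  #|schur_triples B| <= nsol (@is_sum n d) B.
Proof.
rewrite nsolE; set Q := [set t | _].
apply: leq_trans (leq_imset_card (fun t => [set t.1.1; t.1.2; t.2]) Q).
apply: subset_leq_card; apply/subsetP => S; rewrite inE.
case/andP=> sSB /existsP[a /existsP[b /existsP[c /and5P[/eqP defS _ _ _ abc]]]].
have [aB bB cB] : [/\ a \in B, b \in B & c \in B].
  by split; apply: (subsetP sSB); rewrite defS !inE eqxx ?orbT.
by apply/imsetP; exists (a, b, c); rewrite // inE /= aB bB cB.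
Qed.

Lemma card_grid n d : #|grid n d| = n ^ d.
Proof. by rewrite card_ffun !card_ord. Qed.

Lemma leq_card_grid n d : 0 < d -> n <= #|grid n d|.
Proof.
by rewrite card_grid; case: n => // n d_gt0; rewrite -{1}(expn1 n.+1) leq_pexp2l.
Qed.

Lemma INR_expn a b : INR (a ^ b) = (INR a ^ b)%R.
Proof. by elim: b => [|b IHb] //=; rewrite expnS mult_INR IHb. Qed.

Lemma INR_le_eps_mul (a b m : nat) (eps : R) :
  0 < m -> (/ INR m < eps)%R -> m * a <= b -> (INR a <= eps * INR b)%R.
Proof.
move=> m_gt0 inv_m_lt /leP/le_INR; rewrite mult_INR => le_ab.
have INR_m_gt0 : (0 < INR m)%R by apply: lt_0_INR; apply/ltP.
have a_ge0 := pos_INR a.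
have -> : INR a = (/ INR m * (INR m * INR a))%R by field; lra.
have inv_m_ge0 := Rlt_le _ _ (Rinv_0_lt_compat _ INR_m_gt0).
apply: Rle_trans (Rmult_le_compat_l _ _ _ inv_m_ge0 le_ab) _.
by apply: Rmult_le_compat_r; [apply: pos_INR | lra].
Qed.

Lemma log2_le (x e : nat) : 0 < x -> x <= 2 ^ e -> (log2 (INR x) <= INR e)%R.
Proof.
move=> x_gt0 /leP/le_INR; rewrite INR_expn => le_x.
have ln2_gt0 : (0 < ln 2)%R by have := ln_lt_2; lra.
have INR_x_gt0 : (0 < INR x)%R by apply: lt_0_INR; apply/ltP.
have : (ln (INR x) <= INR e * ln 2)%R.
  rewrite -ln_pow; last lra.
  case: (Rle_lt_or_eq_dec _ _ le_x) => [lt_x | ->]; last exact: Rle_refl.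
  exact/Rlt_le/ln_increasing.
rewrite /log2 => le_ln; apply: (Rmult_le_reg_r (ln 2)) => //.
by rewrite /Rdiv Rmult_assoc Rinv_l; lra.
Qed.

Lemma sum_free0 n d : sum_free (set0 : {set grid n d}).
Proof. by apply/forall_inP => a; rewrite inE. Qed.

Theorem mainTheorem5 :
  forall (d : nat), (0 < d)%N ->
  forall (eps : R), (0 < eps < 1)%R ->
  exists (n0 : nat) (C : forall n : nat, {set {set grid n d}}),
    (forall n : nat, (n0 <= n)%N ->
       (forall A : {set grid n d}, sum_free A ->
          exists2 B, B \in C n & A \subset B) /\
       (forall B : {set grid n d}, B \in C n ->
          (INR #|schur_triples B| <= eps * INR n ^ (2 * d))%R)) /\
    (forall delta : R, (0 < delta)%R ->
       exists N : nat, forall n : nat, (N <= n)%N ->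
         (log2 (INR #|C n|) <= delta * INR n ^ d)%R).
Proof.
move=> d d_gt0 eps [eps_gt0 _].
have [m [inv_m_lt /ltP m_gt0]] := archimed_cor1 eps eps_gt0.
pose C n := containers (@is_sum n d) m (sqrt_pow2 #|grid n d|).
have [N0 large0] := sqrt_pow2_large (32 * m * m).
have cover n : N0 <= n -> forall A, sum_free A -> exists2 B, B \in C n & A \subset B.
  move=> le_n A; apply: (sqrt_containers_cover (@is_sum_functional n d)
                          (@is_sum_cancelr n d) (@is_sum_cancell n d) m_gt0).
  exact: large0 (leq_trans le_n (leq_card_grid n d_gt0)).
exists N0, C; split.
  move=> n le_n; split; first exact: cover.
  move=> B; rewrite inE => /andP[_ few_sol].
  have -> : (INR n ^ (2 * d) = INR (#|grid n d| * #|grid n d|))%R.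
    by rewrite card_grid -expnD addnn -mul2n INR_expn.
  apply: INR_le_eps_mul m_gt0 inv_m_lt _.
  exact: leq_trans (leq_mul (leqnn m) (card_schur_triples_le B)) few_sol.
move=> delta delta_gt0.
have [M [inv_M_lt /ltP M_gt0]] := archimed_cor1 delta delta_gt0.
have [N1 large1] := sqrt_pow2_large (M * (8 * m + 1) * (4 * m + 6)).
exists (maxn N0 N1).+1 => n; rewrite gtn_max => /andP[lt_n0 lt_n1].
have le_N := leq_card_grid n d_gt0.
have [B CB _] := cover n (ltnW lt_n0) set0 (sum_free0 n d).
have N_gt0 : 0 < #|grid n d| by apply: leq_trans le_N; apply: leq_ltn_trans lt_n0.
have [e card_C le_e] :=
  card_sqrt_containers (@is_sum n d) N_gt0 (large1 _ (leq_trans (ltnW lt_n1) le_N)).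
have C_gt0 : 0 < #|C n| by apply/card_gt0P; exists B.
apply: Rle_trans (log2_le C_gt0 card_C) _.
by rewrite -INR_expn -card_grid; apply: INR_le_eps_mul M_gt0 inv_M_lt _.
Qed.
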